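(* Consider $\dot x=f(x)+\psi(x)$, where $f,\psi:\mathbb R^n\to\mathbb R^n$ are continuous, $f(0)=0$, and there exists $L>0$ with $\|\psi(x)\|\le L\|x\|$ for all $x\in\mathbb R^n$. Suppose there is a continuously differentiable positive definite function $V:\mathbb R^n\to\mathbb R$ such that along trajectories of the nominal system $\dot x=f(x)$, $$\dot V(x)=\frac{\partial V}{\partial x}(x)f(x)\le-aV(x)^p-bV(x)^q$$ with $a,b>0$, $0<p<1$, $q>1$, and suppose there exist $k_1,k_2>0$ such that $V(x)\ge k_1\|x\|^2$ and $\|\frac{\partial V}{\partial x}(x)\|\le k_2\|x\|$ for all $x\in\mathbb R^n$. Then the origin of $\dot x=f(x)+\psi(x)$ is fixed-time stable.
   Context: The origin of $\dot x=F(x)$ is fixed-time stable if it is Lyapunov stable and there exist a neighborhood $D$ of the origin and a constant $T<\infty$ such that every solution with $x(0)\in D$ satisfies $x(t)=0$ for all $t\ge T$ (the bound $T$ being independent of the initial condition in $D$). *)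

From HB Require Import structures.
From mathcomp Require Import all_boot all_order all_algebra.
From mathcomp Require Import all_classical all_reals all_analysis.
Set Implicit Arguments. Unset Strict Implicit. Unset Printing Implicit Defensive.
Import Order.TTheory GRing.Theory Num.Theory.
Import numFieldNormedType.Exports.
Local Open Scope classical_set_scope.
Local Open Scope ring_scope.

Definition grad (R : realType) (n : nat) (V : 'rV[R]_n -> R) (x : 'rV[R]_n)
  : 'rV[R]_n := \row_(i < n) derive V x (delta_mx 0 i).

Definition dotv (R : realType) (n : nat) (u v : 'rV[R]_n) : R :=
  \sum_(i < n) u 0 i * v 0 i.

Definition C1 (R : realType) (n : nat) (V : 'rV[R]_n -> R) : Prop :=
  (forall x, differentiable V x) /\ continuous (grad V).

Definition pos_def (R : realType) (n : nat) (V : 'rV[R]_n -> R) : Prop :=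
  V 0 = 0 /\ forall x, x != 0 -> 0 < V x.

(* x : [0,oo) -> R^n is a (forward, globally defined) solution of xdot = F x:
   differentiable at each t > 0 with derivative F (x t), right-continuous at 0. *)
Definition is_solution (R : realType) (n : nat) (F : 'rV[R]_n -> 'rV[R]_n)
  (x : R -> 'rV[R]_n) : Prop :=
  (forall t : R, 0 < t -> derivable x t 1 /\ 'D_1 x t = F (x t)) /\
  x @ at_right 0 --> x 0.

Definition lyapunov_stable (R : realType) (n : nat) (F : 'rV[R]_n -> 'rV[R]_n)
  : Prop :=
  forall eps : R, 0 < eps -> exists2 delta : R, 0 < delta &
    forall x : R -> 'rV[R]_n, is_solution F x -> `|x 0| < delta ->
      forall t : R, 0 <= t -> `|x t| < eps.

Definition fixed_time_stable (R : realType) (n : nat) (F : 'rV[R]_n -> 'rV[R]_n)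
  : Prop :=
  lyapunov_stable F /\
  exists D : set 'rV[R]_n, nbhs (0 : 'rV[R]_n) D /\
    exists T : R, forall x : R -> 'rV[R]_n, is_solution F x -> D (x 0) ->
      forall t : R, T <= t -> 0 <= t -> x t = 0.

From HB Require Import structures.
From mathcomp Require Import all_boot all_order all_algebra.
From mathcomp Require Import all_classical all_reals all_analysis.
From mathcomp Require Import lra ring.
Import Order.TTheory GRing.Theory Num.Theory.
Import numFieldNormedType.Exports.
Local Open Scope classical_set_scope.
Local Open Scope ring_scope.

(* Near the origin the perturbation is dominated by the [V ^ p] term of the
   nominal decay: [<grad V, psi> <= c V] with [c = n k2 L / k1], and since
   [p < 1], [c V <= (a / 2) V ^ p] on a small sublevel set [{V < W0}].  There
   [V' <= - (a / 2) V ^ p] along perturbed solutions, so the sublevel set is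
   forward invariant and [V ^ (1 - p) + (a / 2) (1 - p) t] is nonincreasing:
   [V] vanishes before [W0 ^ (1 - p) / ((a / 2) (1 - p))], whatever the initial
   condition in [{V < W0}].  The bound [V >= k1 |x| ^ 2] turns this into
   stability and settling of [x]. *)

Lemma mx_norm_entry_le {R : realDomainType} {m n : nat} (A : 'M[R]_(m, n)) i j :
  `|A i j| <= `|A|.
Proof.
by rewrite [leRHS]/Num.norm /= mx_normrE; apply: (le_bigmax _ _ (i, j)).
Qed.

Lemma dotvDr {R : realType} {n : nat} (u v w : 'rV[R]_n) :
  dotv u (v + w) = dotv u v + dotv u w.
Proof.
by rewrite /dotv -big_split; apply: eq_bigr => i _; rewrite mxE mulrDr.
Qed.

(* The matrix norm is the sup norm, hence the factor [n]. *)
Lemma norm_dotv_le {R : realType} {n : nat} (u v : 'rV[R]_n) :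
  `|dotv u v| <= n%:R * (`|u| * `|v|).
Proof.
apply: le_trans (ler_norm_sum _ _ _) _.
rewrite -[n in n%:R]card_ord mulr_natl -sumr_const; apply: ler_sum => i _.
by rewrite normrM; apply: ler_pM; rewrite ?mx_norm_entry_le.
Qed.

Lemma diff_dotv_grad {R : realType} {n : nat} (V : 'rV[R]_n -> R) y v :
  differentiable V y -> 'd V y v = dotv (grad V y) v.
Proof.
move=> dV; rewrite [in LHS](row_sum_delta v) linear_sum /dotv.
by apply: eq_bigr => i _; rewrite linearZ /= mxE -deriveE // mulrC.
Qed.

Section ChainRule.
Variables (R : realType) (n : nat) (V : 'rV[R]_n -> R).
Variables (x : R -> 'rV[R]_n) (t : R).
Hypotheses (dV : differentiable V (x t)) (dx : derivable x t 1).

Let dVx : differentiable (V \o x) t.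
Proof. by apply: differentiable_comp => //; apply/derivable1_diffP. Qed.

Lemma derivable_comp_grad : derivable (V \o x) t 1.
Proof. exact/derivable1_diffP. Qed.

Lemma derive1_comp_grad : derive1 (V \o x) t = dotv (grad V (x t)) ('D_1 x t).
Proof.
have dx' : differentiable x t by apply/derivable1_diffP.
by rewrite derive1E deriveE // diff_comp //= -diff_dotv_grad // deriveE.
Qed.

End ChainRule.

Section Sublevel.
Variables (R : realType) (W : R -> R) (W0 : R).
Hypotheses (Wc : {within `[0, +oo[, continuous W})
  (Wd : forall t, 0 < t -> derivable W t 1)
  (W'le0 : forall t, 0 < t -> W t < W0 -> derive1 W t <= 0).

Lemma sublevel_nonincreasing s : 0 <= s -> (forall u, 0 < u < s -> W u < W0) ->
  forall u v, 0 <= u -> u <= v -> v <= s -> W v <= W u.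
Proof.
move=> s0 Ws u v u0 uv vs; apply: (@ler0_derive1_le_cc _ W 0 s).
- by move=> y; rewrite in_itv => /andP[y0 _]; apply: Wd.
- by move=> y; rewrite in_itv => /andP[y0 ys]; apply: W'le0 => //; apply/Ws/andP.
- by apply: continuous_subspaceW Wc; apply: subset_itv; rewrite bnd_simp.
- by rewrite in_itv /=; apply/andP; split; lra.
- by rewrite in_itv /=; apply/andP; split; lra.
- exact: uv.
Qed.

(* If the sublevel set were left, at the first exit time [s = inf S] we would
   still have [W s <= W 0 < W0], and by continuity [W < W0] a bit beyond [s]. *)
Lemma sublevel_invariant : W 0 < W0 -> forall t, 0 <= t -> W t < W0.
Proof.
move=> W00 t t0; rewrite ltNge; apply/negP => Wt.
pose S := [set u : R | 0 <= u /\ W0 <= W u].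
have S0 : S !=set0 by exists t.
have Slb : has_lbound S by exists 0 => u [].
pose s := inf S.
have s0 : 0 <= s by apply: lb_le_inf => // u [].
have before_s u : 0 <= u -> u < s -> W u < W0.
  move=> u0 us; rewrite ltNge; apply/negP => h.
  by have := ge_inf Slb (conj u0 h); rewrite -/s; lra.
have Ws : W s < W0.
  have Wu u : 0 < u < s -> W u < W0 by case/andP => u0 us; apply: before_s; lra.
  by have := @sublevel_nonincreasing s s0 Wu 0 s (lexx 0) s0 (lexx s); lra.
have Wcs := proj1 (subspace_continuousP _ _) Wc s.
have /(_ _)/cvgr_lt/(_ _ Ws) := Wcs; rewrite /= in_itv /= s0 => /(_ isT).
rewrite near_withinE => /nbhs_ballP [e /= e0 He].
suff /(lb_le_inf S0) : lbound S (s + e / 2) by rewrite -/s; lra.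
move=> u [u0 Wu]; rewrite leNgt; apply/negP => ue.
have [us|su] := ltP u s; first by have := before_s u u0 us; lra.
suff : W u < W0 by lra.
by apply: He; rewrite ?in_itv /= ?u0 // -ball_normE /= distrC ger0_norm; lra.
Qed.

Lemma nonincreasing_from_sublevel : W 0 < W0 ->
  forall u v, 0 <= u -> u <= v -> W v <= W u.
Proof.
move=> W00 u v u0 uv; apply: (@sublevel_nonincreasing v) => //; first lra.
by move=> y /andP[y0 _]; apply: sublevel_invariant; lra.
Qed.

End Sublevel.

Section FiniteTime.
Variables (R : realType) (W : R -> R) (W0 k p : R).
Hypotheses (Wc : {within `[0, +oo[, continuous W})
  (Wd : forall t, 0 < t -> derivable W t 1)
  (W'le : forall t, 0 < t -> W t < W0 -> derive1 W t <= - k * W t `^ p)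
  (W_ge0 : forall t, 0 <= t -> 0 <= W t)
  (k_gt0 : 0 < k) (p_lt1 : p < 1).

Lemma decay_nonincreasing : W 0 < W0 ->
  forall u v, 0 <= u -> u <= v -> W v <= W u.
Proof.
apply: nonincreasing_from_sublevel => // t t0 /(W'le t t0) /le_trans; apply.
by rewrite mulNr oppr_le0 mulr_ge0 ?powR_ge0 ?ltW.
Qed.

Lemma powR_add_time_nonincreasing s t : 0 < s -> s <= t ->
    (forall y, s <= y <= t -> 0 < W y < W0) ->
  W t `^ (1 - p) + k * (1 - p) * t <= W s `^ (1 - p) + k * (1 - p) * s.
Proof.
move=> s0 st Ws.
have p1_gt0 : 0 < 1 - p by rewrite subr_gt0.
pose h u := W u `^ (1 - p) + k * (1 - p) * u.
have h' y : 0 < y -> 0 < W y ->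
    is_derive y 1 h ((1 - p) * W y `^ (1 - p - 1) * 'D_1 W y + k * (1 - p)).
  move=> y0 Wy.
  have dWp :=
    is_derive1_comp (is_derive1_powR (1 - p) Wy) (derivableP (Wd y y0)).
  have := is_deriveD dWp (is_deriveZ (k * (1 - p)) (@is_derive_id _ _ y 1)).
  by congr is_derive; rewrite /GRing.scale /= mulr1.
have inside y : y \in `]s, t[ -> [/\ 0 < y, 0 < W y & W y < W0].
  rewrite in_itv /= => /andP[sy yt].
  have /andP[Wy WyW0] : 0 < W y < W0 by apply/Ws/andP; split; lra.
  by split => //; lra.
have h'_in y : y \in `]s, t[ ->
    is_derive y 1 h ((1 - p) * W y `^ (1 - p - 1) * 'D_1 W y + k * (1 - p)).
  by move=> /inside[y0 Wy _]; apply: h'.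
apply: (@ler0_derive1_le_cc _ h s t); last 3 first.
- by rewrite in_itv /=; apply/andP; split; lra.
- by rewrite in_itv /=; apply/andP; split; lra.
- exact: st.
- by move=> y /h'_in [].
- move=> y syt; rewrite derive1E; have [_ ->] := h'_in y syt.
  have [y0 Wy WyW0] := inside y syt.
  have Wyp : 0 < W y `^ p by apply: powR_gt0.
  have -> : 1 - p - 1 = - p by ring.
  rewrite powRN.
  have : (1 - p) * (W y `^ p)^-1 * 'D_1 W y
         <= (1 - p) * (W y `^ p)^-1 * (- k * W y `^ p).
    rewrite -derive1E; apply/ler_wpM2l/W'le => //.
    by rewrite divr_ge0 ?powR_ge0 ?ltW.
  have -> : (1 - p) * (W y `^ p)^-1 * (- k * W y `^ p) = - (k * (1 - p)).
    by field; rewrite gt_eqF.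
  lra.
- apply: continuous_in_subspaceT => y; rewrite inE /= in_itv /= => syt.
  have /andP[sy _] := syt; have /andP[Wy _] := Ws y syt.
  have [dh _] := h' y (lt_le_trans s0 sy) Wy.
  exact/differentiable_continuous/derivable1_diffP.
Qed.

Lemma finite_time_extinction : W 0 < W0 ->
  forall t, W0 `^ (1 - p) / (k * (1 - p)) <= t -> W t = 0.
Proof.
move=> W00 t tT.
have mono := decay_nonincreasing W00.
have W0_gt0 : 0 < W0 by have := W_ge0 0 (lexx 0); lra.
have c_gt0 : 0 < k * (1 - p) by rewrite mulr_gt0 // subr_gt0.
set c := k * (1 - p) in tT c_gt0 *.
have W0p_gt0 : 0 < W0 `^ (1 - p) by apply: powR_gt0.
have {tT} cT : W0 `^ (1 - p) <= c * t by rewrite mulrC -ler_pdivrMr.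
have t_gt0 : 0 < t by rewrite -(pmulr_rgt0 _ c_gt0); lra.
apply/eqP; rewrite eq_le W_ge0 ?andbT ?(ltW t_gt0) // leNgt; apply/negP => Wt_gt0.
set P := W t `^ (1 - p).
have P_gt0 : 0 < P by apply: powR_gt0.
pose eps := Num.min (t / 2) (P / (2 * c)).
have eps_gt0 : 0 < eps by rewrite lt_min !divr_gt0 //; lra.
have eps_t : eps <= t by rewrite ge_min; apply/orP; left; lra.
have c_eps : c * eps <= P / 2.
  have -> : P / 2 = c * (P / (2 * c)) by field; rewrite gt_eqF.
  by rewrite ler_pM2l // ge_min lexx orbT.
have Wpos y : eps <= y <= t -> 0 < W y < W0.
  case/andP=> epsy yt; apply/andP; split.
    by apply: lt_le_trans Wt_gt0 (mono y t _ yt); lra.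
  by apply: le_lt_trans (mono 0 y _ _) W00; lra.
have := @powR_add_time_nonincreasing eps t eps_gt0 eps_t Wpos.
have : W eps `^ (1 - p) <= W0 `^ (1 - p).
  have /andP[Weps_gt0 WepsW0] : 0 < W eps < W0 by apply/Wpos/andP; split; lra.
  by apply: ge0_ler_powR; rewrite ?nnegrE ?subr_ge0 ?ltW.
rewrite -/c -/P; lra.
Qed.

End FiniteTime.

Section LocalFiniteTimeLyapunov.
Variables (R : realType) (n : nat) (F : 'rV[R]_n -> 'rV[R]_n) (V : 'rV[R]_n -> R).
Variables (k1 W0 k p : R).
Hypotheses (Vd : forall y, differentiable V y) (V0 : V 0 = 0)
  (k1_gt0 : 0 < k1) (V_ge : forall y, k1 * `|y| ^+ 2 <= V y)
  (W0_gt0 : 0 < W0) (k_gt0 : 0 < k) (p_lt1 : p < 1)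
  (V'le : forall y, V y < W0 -> dotv (grad V y) (F y) <= - k * V y `^ p).

Let V_ge0 y : 0 <= V y.
Proof. by apply: le_trans (V_ge y); rewrite mulr_ge0 ?sqr_ge0 // ltW. Qed.

Let V_cvg0 : V @ (0 : 'rV[R]_n) --> 0.
Proof.
by have := differentiable_continuous (Vd 0); rewrite /prop_for /continuous_at V0.
Qed.

Lemma lyapunov_along_solution x : is_solution F x ->
  [/\ {within `[0, +oo[, continuous (V \o x)},
      forall t, 0 < t -> derivable (V \o x) t 1
    & forall t, 0 < t -> V (x t) < W0 ->
        derive1 (V \o x) t <= - k * V (x t) `^ p].
Proof.
move=> [x' x_cont]; split=> [|t t0|t t0 /V'le].
- apply/continuous_within_itvcyP; split.
    move=> t; rewrite in_itv /= andbT => t0.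
    apply: continuous_comp; last exact: differentiable_continuous.
    by have [/derivable1_diffP/differentiable_continuous] := x' t t0.
  exact: (continuous_cvg _ (differentiable_continuous (Vd _)) x_cont).
- by have [x't _] := x' t t0; apply: derivable_comp_grad.
- have [x't x'E] := x' t t0.
  by rewrite derive1_comp_grad // x'E.
Qed.

Lemma lyapunov_stable_of_decay : lyapunov_stable F.
Proof.
move=> eps eps_gt0.
have m_gt0 : 0 < Num.min W0 (k1 * eps ^+ 2).
  by rewrite lt_min W0_gt0 mulr_gt0 ?exprn_gt0.
have /(_ (nbhs_filter _))/nbhs_ballP[d /= d_gt0 Vd_lt] :=
  cvgr_lt _ V_cvg0 _ m_gt0.
exists d => // x x_sol x0_d t t0.
have Vx0 : V (x 0) < Num.min W0 (k1 * eps ^+ 2).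
  by apply: Vd_lt; rewrite -ball_normE /= sub0r normrN.
move: Vx0; rewrite lt_min => /andP[Vx0_W0 Vx0_eps].
have [Vxc Vxd V'x] := @lyapunov_along_solution x x_sol.
have := @decay_nonincreasing _ (V \o x) W0 k p Vxc Vxd V'x k_gt0 Vx0_W0
  0 t (lexx 0) t0.
move: (V_ge (x t)) => /le_trans/[apply]/le_lt_trans/(_ Vx0_eps).
by rewrite ltr_pM2l // ltr_pXn2r // !nnegrE // ltW.
Qed.

Lemma solution_settles x : is_solution F x -> V (x 0) < W0 ->
  forall t, W0 `^ (1 - p) / (k * (1 - p)) <= t -> x t = 0.
Proof.
move=> /lyapunov_along_solution[Vxc Vxd V'x] Vx0 t tT.
have Vx_ge0 s : 0 <= s -> 0 <= V (x s) by move=> _; apply: V_ge0.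
have /= Vxt := @finite_time_extinction _ (V \o x) W0 k p Vxc Vxd V'x Vx_ge0
  k_gt0 p_lt1 Vx0 t tT.
have : k1 * `|x t| ^+ 2 <= 0 by rewrite -Vxt V_ge.
rewrite pmulr_rle0 // => xt_le0.
by apply/eqP; rewrite -normr_eq0 -sqrf_eq0 eq_le xt_le0 sqr_ge0.
Qed.

Theorem fixed_time_stable_of_decay : fixed_time_stable F.
Proof.
split; first exact: lyapunov_stable_of_decay.
exists [set y | V y < W0]; split.
  by have := cvgr_lt _ V_cvg0 _ W0_gt0; apply.
exists (W0 `^ (1 - p) / (k * (1 - p))) => x x_sol Vx0 t tT _.
exact: solution_settles.
Qed.

End LocalFiniteTimeLyapunov.

Lemma dotv_le_of_linear_growth {R : realType} {n : nat} (g w y : 'rV[R]_n)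
    (k1 k2 L v : R) :
  0 < k1 -> 0 <= k2 -> 0 <= L ->
  `|g| <= k2 * `|y| -> `|w| <= L * `|y| -> k1 * `|y| ^+ 2 <= v ->
  dotv g w <= n%:R * k2 * L / k1 * v.
Proof.
move=> k1_gt0 k2_ge0 L_ge0 g_le w_le y_le.
apply: le_trans (real_ler_norm (num_real _)) _.
apply: le_trans (norm_dotv_le g w) _.
have gw_le : `|g| * `|w| <= k2 * `|y| * (L * `|y|) by apply: ler_pM.
apply: le_trans (ler_wpM2l (ler0n _ _) gw_le) _.
have -> : n%:R * (k2 * `|y| * (L * `|y|)) = n%:R * k2 * L / k1 * (k1 * `|y| ^+ 2).
  by field; rewrite gt_eqF.
apply: (ler_wpM2l _ y_le); apply: divr_ge0 (ltW k1_gt0).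
by apply: mulr_ge0 => //; apply: mulr_ge0.
Qed.

Lemma ler_mul_powR {R : realType} (c e v p : R) :
  0 <= v -> v `^ (1 - p) * c <= e -> c * v <= e * v `^ p.
Proof.
move=> v_ge0 vc_le.
have -> : c * v = v `^ (1 - p) * c * v `^ p.
  rewrite mulrAC -powRD; last by rewrite subrK oner_eq0.
  by rewrite subrK powRr1 // mulrC.
by apply: (ler_wpM2r _ vc_le); apply: powR_ge0.
Qed.

Theorem corollary2 (R : realType) (n : nat)
  (f psi : 'rV[R]_n -> 'rV[R]_n) (V : 'rV[R]_n -> R)
  (a b p q L k1 k2 : R) :
  continuous f -> continuous psi -> f 0 = 0 ->
  0 < L -> (forall x, `|psi x| <= L * `|x|) ->
  C1 V -> pos_def V ->
  0 < a -> 0 < b -> 0 < p -> p < 1 -> 1 < q ->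
  (forall x, dotv (grad V x) (f x) <= - a * V x `^ p - b * V x `^ q) ->
  0 < k1 -> 0 < k2 ->
  (forall x, k1 * `|x| ^+ 2 <= V x) ->
  (forall x, `|grad V x| <= k2 * `|x|) ->
  fixed_time_stable (fun x => f x + psi x).
Proof.
move=> _ _ _ L_gt0 psi_le [Vd _] [V0 _] a_gt0 b_gt0 _ p_lt1 _ V'f k1_gt0 k2_gt0
  V_ge grad_le.
pose c := n%:R * k2 * L / k1.
have c_ge0 : 0 <= c by rewrite /c !(divr_ge0, mulr_ge0) // ltW.
pose W0 := (a / 2 / (c + 1)) `^ (1 - p)^-1.
have W0_gt0 : 0 < W0 by apply/powR_gt0/divr_gt0; lra.
have W0c : W0 `^ (1 - p) * c <= a / 2.
  rewrite -powRrM mulVf ?subr_eq0 ?gt_eqF // powRr1; last first.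
    by rewrite !divr_ge0 //; lra.
  by rewrite mulrAC ler_pdivrMr; lra.
have a2_gt0 : 0 < a / 2 by lra.
apply: (@fixed_time_stable_of_decay _ _ _ V k1 W0 (a / 2) p Vd V0 k1_gt0 V_ge
  W0_gt0 a2_gt0 p_lt1) => y Vy.
have V_ge0 : 0 <= V y by apply: le_trans (V_ge y); rewrite mulr_ge0 ?sqr_ge0 ?ltW.
have psi_part : dotv (grad V y) (psi y) <= c * V y.
  by apply: (dotv_le_of_linear_growth _ _ y) => //; apply: ltW.
have c_part : c * V y <= a / 2 * V y `^ p.
  apply: ler_mul_powR => //; apply: le_trans W0c; apply: ler_wpM2r => //.
  by apply: ge0_ler_powR; rewrite ?nnegrE //; lra.
have := mulr_ge0 (ltW b_gt0) (powR_ge0 (V y) q).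
have := V'f y; rewrite dotvDr; lra.
Qed.
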